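(* Let $G(\mathcal V,\mathcal E)$ be a finite simple directed graph with $|\mathcal V|\ge 2$ and let $f>0$ be an integer. Suppose that for every partition $X,Y,Z$ of $\mathcal V$ with $X,Y$ non-empty and $|Z|\le f$, either $X \Rightarrow_{\mathcal V - Z} Y$ or $Y \Rightarrow_{\mathcal V - Z} X$. Let $F\subseteq\mathcal V$ with $|F|\le f$, and let $A,B$ be a partition of $\mathcal V-F$ into non-empty sets with $A \Rightarrow_{\mathcal V - F} B$. Then: (1) if it is not the case that $B \Rightarrow_{\mathcal V - F} A$, there exists a non-empty set $S\subseteq A$ such that $S \Rightarrow_{\mathcal V - F} \mathcal V-F-S$ and $S$ is strongly connected in $G_{-F}$; (2) if $B \Rightarrow_{\mathcal V - F} A$, there exists a non-empty set $S\subseteq A\cup B$ such that $S \Rightarrow_{\mathcal V - F} \mathcal V-F-S$, $S$ is strongly connected in $G_{-F}$, and $A \Rightarrow_{\mathcal V - F} S-A$; (3) every node of $F$ has at least $f+1$ incoming neighbors in $\mathcal V-F$.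
   Context: An $(X,y)$-path is a directed path from some node of $X$ to the node $y\notin X$; it excludes $F$ if it contains no node of $F$; $(X,y)$-paths are disjoint if they pairwise share only $y$. For pairwise disjoint $X,Y,F\subseteq\mathcal V$ with $|F|\le f$, $X \Rightarrow_{\mathcal V - F} Y$ means: $Y=\emptyset$, or every $y\in Y$ has at least $f+1$ pairwise disjoint $(X,y)$-paths excluding $F$. $G_{-F}$ is the graph obtained from $G$ by deleting the nodes of $F$ and all edges incident to them. A set $S\subseteq\mathcal V-F$ is strongly connected in $G_{-F}$ if for all $i,j\in S$ there is a directed $(i,j)$-path in $G_{-F}$. A node $i$ is an incoming neighbor of $k$ if $(i,k)\in\mathcal E$. *)

From mathcomp Require Import all_boot.
Set Implicit Arguments. Unset Strict Implicit. Unset Printing Implicit Defensive.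

(* A finite simple directed graph: node set T (a finType), edge relation e,
   where e i k means (i,k) is an edge (i -> k).  Simplicity = no self-loops
   (multi-edges are impossible with a relation). *)

Section Paths.
Variables (T : finType) (e : rel T).

Definition dpath (p : seq T) : bool :=
  if p is x :: q then path e x q && uniq p else false.

Definition Xy_path (X : {set T}) (y : T) (p : seq T) : bool :=
  [&& dpath p, head y p \in X & last y p == y].

Definition excludes (F : {set T}) (p : seq T) : bool :=
  all (fun v => v \notin F) p.

Definition disjoint_paths (y : T) (ps : seq (seq T)) : Prop :=
  forall i j, i < j < size ps ->
    forall v, v \in nth [::] ps i -> v \in nth [::] ps j -> v = y.

Definition reach (f : nat) (F X Y : {set T}) : Prop :=
  Y = set0 \/
  forall y, y \in Y ->
    exists ps : seq (seq T),
      [/\ f.+1 <= size ps,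
          all (fun p => Xy_path X y p && excludes F p) ps &
          disjoint_paths y ps].

Definition strongly_connected_minus (F S : {set T}) : Prop :=
  forall i j, i \in S -> j \in S ->
    connect [rel u v | [&& e u v, u \notin F & v \notin F]] i j.

End Paths.

(* A node r of G - F reached by as few nodes as possible is reached back by each of them, so
   the set S of nodes reaching r is strongly connected in G - F and no path of G - F enters S
   from outside. Every fan into S therefore starts in S, and the hypothesis applied to the cut
   (S, V - F - S) gives S => V - F - S. This is (2), where A => S - A since S - A lies in B.
   For (1), S meets A; if the cut at S :&: A went the other way, its fans would start in S - A,
   a part of B, while the cut at A - S gives B :|: (S :&: A) => A - S, so B => A by
   transitivity of fans, a consequence of Menger's theorem. For (3), if v in F had a set N of
   at most f in-neighbours outside F, the cut ({v}, V - N - {v}) with Z = N would fail: two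
   paths out of v share v, and among f + 1 paths into v avoiding N one also avoids F - {v}, so
   its last edge would come from N.
   Menger's theorem is proved by induction on the number of edges: if deleting an edge xy
   creates a separator S with |S| < k, then both x |: S and y |: S separate in G, and k
   disjoint walks into x |: S are glued, along S and the edge xy, to k disjoint walks out of
   y |: S. *)

From mathcomp Require Import all_boot.
Set Implicit Arguments. Unset Strict Implicit. Unset Printing Implicit Defensive.

Section Walks.
Variable T : finType.
Implicit Types (g : rel T) (A B C Z : {set T}) (p q : seq T).

Definition rel_minus g C : rel T := [rel u v | [&& g u v, u \notin C & v \notin C]].

Definition walk g A B p :=
  if p is a :: q then [&& path g a q, a \in A & last a q \in B] else false.

Definition separates g A B C :=
  [forall a in A :\: C, forall b in B :\: C, ~~ connect (rel_minus g C) a b].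

Definition disjoint_walks (ps : seq (seq T)) := pairwise (fun p q => [disjoint p & q]) ps.

Lemma excludesE C p : excludes C p = ~~ has [in C] p.
Proof. by rewrite -all_predC. Qed.

Lemma excludes_cat C p q : excludes C (p ++ q) = excludes C p && excludes C q.
Proof. exact: all_cat. Qed.

Lemma excludes_sub C p q : {subset q <= p} -> excludes C p -> excludes C q.
Proof. by move=> qp /allP pC; apply/allP => v /qp /pC. Qed.

Lemma excludes_setS C (D : {set T}) p : D \subset C -> excludes C p -> excludes D p.
Proof. by move=> /subsetP DC; apply: sub_all => v; apply: contra (DC v). Qed.

Lemma excludes_last C a q : a \notin C -> excludes C q -> last a q \notin C.
Proof.
move=> aC qC; have aqC : excludes C (a :: q) by rewrite /= aC.
exact: (allP aqC) (mem_last a q).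
Qed.

Lemma path_minus g C a p :
  a \notin C -> path (rel_minus g C) a p = path g a p && excludes C p.
Proof.
elim: p a => [|b p IH] a aC //=; rewrite /rel_minus /= aC.
by case bC: (b \in C); rewrite /= ?andbF // IH ?bC // andbT andbA.
Qed.

Lemma path_minus_excludes g C a q :
  path (rel_minus g C) a q -> last a q \notin C -> excludes C (a :: q).
Proof.
case: q => [_ /= -> //|b q /= /andP [/and3P [_ aC bC] bq] lC].
by rewrite aC /=; move: bq; rewrite path_minus // => /andP [_ qC]; rewrite /= bC qC.
Qed.

Lemma connect_minus_notin g C a b :
  connect (rel_minus g C) a b -> (a \notin C) = (b \notin C).
Proof.
case/connectP => -[_ -> //|c q /= /andP [/and3P [_ aC cC] cq] ->].
by move: cq; rewrite aC path_minus // => /andP [_ /(excludes_last cC)].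
Qed.

Lemma connect_minus_prefix g C a q v : path g a q -> excludes C (belast a q) ->
  v \in a :: q -> v \notin C -> connect (rel_minus g C) a v.
Proof.
elim: q a => [|b q IH] a /=; first by move=> _ _; rewrite inE => /eqP ->.
move=> /andP [gab bq] /andP [aC qC]; rewrite inE => /predU1P [-> //|vq vC].
have bC : b \notin C.
  by case: q {IH bq} qC vq => [|c q] /=; [rewrite inE => _ /eqP <- | case/andP].
apply: connect_trans (IH b bq qC vq vC).
by apply: connect1; rewrite /rel_minus /= gab aC bC.
Qed.

Lemma connect_minus_suffix g C a q v : path g a q -> excludes C q ->
  v \in a :: q -> v \notin C -> connect (rel_minus g C) v (last a q).
Proof.
elim: q a v => [|b q IH] a v /=; first by move=> _ _; rewrite inE => /eqP ->.
move=> /andP [gab bq] /andP [bC qC]; rewrite inE => /predU1P [-> aC|vq]; last exact: IH.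
apply: connect_trans (IH b b bq qC (mem_head _ _) bC).
by apply: connect1; rewrite /rel_minus /= gab aC bC.
Qed.

Lemma walk_sub g g' A B p : subrel g g' -> walk g A B p -> walk g' A B p.
Proof. by move=> gg'; case: p => // a q /and3P [aq aA lB]; rewrite /= aA lB (sub_path gg' aq). Qed.

Lemma walk_has_last g A B p : walk g A B p -> has [in B] p.
Proof. by case: p => // a q /and3P [_ _ lB]; apply/hasP; exists (last a q); rewrite ?mem_last. Qed.

Lemma walk_cat g A B v p q :
  walk g A [set v] p -> walk g [set v] B q -> walk g A B (p ++ behead q).
Proof.
case: p => // a p /and3P [ap aA /set1P lv]; case: q => // b q /and3P [bq /set1P bv lB].
by rewrite /= cat_path ap last_cat lv -bv bq aA lB.
Qed.

Lemma separatesP g A B C :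
  reflect (forall p, walk g A B p -> ~~ excludes C p) (separates g A B C).
Proof.
apply: (iffP forall_inP) => [sep [|a q] //= /and3P [gq aA lB]|nowalk a].
  apply/negP => /= /andP [aC qC].
  have lC := excludes_last aC qC.
  have aAC : a \in A :\: C by rewrite inE aC aA.
  have lBC : last a q \in B :\: C by rewrite inE lC lB.
  move: (forall_inP (sep a aAC) _ lBC) => /negP; apply.
  by apply/connectP; exists q; rewrite // path_minus // gq.
rewrite inE => /andP [aC aA]; apply/forall_inP => b; rewrite inE => /andP [bC bB].
apply/negP => /connectP [q]; rewrite path_minus // => /andP [gq qC] bq.
by move: (nowalk (a :: q)); rewrite /= gq aA -bq bB aC qC => /(_ isT).
Qed.

Lemma disjoint_seqP p q : reflect {in p, forall v, v \notin q} [disjoint p & q].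
Proof. by rewrite disjoint_has; apply: hasPn. Qed.

Lemma disjoint_walks_mem ps p q : disjoint_walks ps -> p \in ps -> q \in ps -> p != q ->
  [disjoint p & q].
Proof.
elim: ps => //= p0 ps IH /andP [d0 dps]; rewrite !inE.
case/predU1P => [->|pin] /predU1P [->|qin]; rewrite ?eqxx // => pq.
- exact: (allP d0).
- by rewrite disjoint_sym (allP d0).
- exact: IH.
Qed.

Lemma disjoint_walks_map (h : seq T -> seq T) ps :
  (forall p, {subset h p <= p}) -> disjoint_walks ps -> disjoint_walks (map h ps).
Proof.
move=> hp; rewrite /disjoint_walks pairwise_map; apply: sub_pairwise => p q /= pq.
by apply/disjoint_seqP => v /hp vp; apply/negP => /hp; rewrite (disjointFr pq vp).
Qed.

Lemma walk_heads_cover g Y B qs y0 : disjoint_walks qs -> all (walk g Y B) qs ->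
  #|Y| <= size qs -> {subset Y <= map (head y0) qs}.
Proof.
move=> dqs wqs leY.
have headsY : {subset map (head y0) qs <= Y}.
  by move=> _ /mapP [[|a q] /(allP wqs) // /and3P [_ aY _] ->].
have uniq_heads : uniq (map (head y0) qs).
  elim: qs dqs wqs {leY headsY} => //= p qs IH /andP [dp dqs] /andP [wp wqs].
  rewrite IH // andbT; apply/mapP => -[q qin hpq].
  have := allP dp q qin; have := allP wqs q qin.
  case: p wp hpq {dp} => // a p _; case: q {qin} => // b q /= -> _.
  by rewrite disjoint_cons mem_head.
have /subset_cardP eqY : #|map (head y0) qs| = #|Y|.
  apply/eqP; rewrite eqn_leq (subset_leq_card (introT subsetP headsY)).
  by move/card_uniqP: uniq_heads; rewrite size_map => ->.
by move=> v; rewrite -(eqY (introT subsetP headsY)).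
Qed.

(* Pigeonhole: paths that all met [C] would meet it in pairwise distinct nodes. *)
Lemma disjoint_paths_avoid z C (ps : seq (seq T)) :
  #|C| < size ps -> disjoint_paths z ps -> z \notin C -> exists2 p, p \in ps & excludes C p.
Proof.
move=> ltC dps zC.
have [meetC|/allPn [p pin]] := boolP (all (fun p => ~~ excludes C p) ps); last first.
  by rewrite negbK; exists p.
pose c (i : 'I_(size ps)) := nth z (filter [in C] (nth [::] ps i)) 0.
have cP i : c i \in C /\ c i \in nth [::] ps i.
  suff : c i \in filter [in C] (nth [::] ps i) by rewrite mem_filter => /andP [].
  apply: mem_nth; rewrite lt0n size_eq0 -has_filter -[has _ _]negbK -excludesE.
  exact: (allP meetC _ (mem_nth [::] (ltn_ord i))).
have c_inj : injective c.
  have shared (i j : 'I_(size ps)) : i < j -> c i = c j -> False.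
    move=> ij cij; have := dps i j; rewrite ij ltn_ord => /(_ isT (c i) (cP i).2).
    by rewrite cij => /(_ (cP j).2) zj; move: zC; rewrite -zj (cP j).1.
  move=> i j cij; apply: val_inj.
  by case: (ltngtP i j) => // [/shared/(_ cij) | /shared/(_ (esym cij))].
have : #|[set c i | i in 'I_(size ps)]| <= #|C|.
  by apply/subset_leq_card/subsetP => _ /imsetP [i _ ->]; apply: (cP i).1.
by rewrite card_imset // card_ord leqNgt ltC.
Qed.

Definition revrel g : rel T := [rel u v | g v u].

Lemma walk_rev g A B p : walk (revrel g) B A (rev p) = walk g A B p.
Proof.
case: p => // a q; rewrite {1}[a :: q]lastI rev_rcons /= rev_path (andbC (_ \in B)).
by case: q => //= b q; rewrite rev_cons last_rcons.
Qed.

Lemma separates_rev g A B C : separates (revrel g) B A C = separates g A B C.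
Proof.
apply/separatesP/separatesP => sep p.
  by rewrite -walk_rev => /sep; rewrite /excludes all_rev.
move=> wp; have := sep (rev p); rewrite -walk_rev revK /excludes all_rev; exact.
Qed.

Definition trim_to Z p := take (find [in Z] p).+1 p.

Lemma trim_toE Z p : has [in Z] p ->
  exists s z s', [/\ p = rcons s z ++ s', trim_to Z p = rcons s z, z \in Z & excludes Z s].
Proof.
case: p => // a q hasZ; rewrite /trim_to; case: (split_find_nth a hasZ) => z s s' zZ sZ.
exists s, z, s'; split; rewrite ?excludesE //.
have -> : find [in Z] (rcons s z ++ s') = size s.
  by rewrite cat_rcons find_cat (negbTE sZ) /= zZ addn0.
by rewrite -(size_rcons s z) take_size_cat.
Qed.

Lemma mem_trim_to Z p : {subset trim_to Z p <= p}.
Proof. exact: mem_take. Qed.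

(* [excludes Z (behead (rev p))]: the walk [p] meets [Z] at most in its last node. *)
Lemma walk_trim_to g A B Z p : walk g A B p -> has [in Z] p ->
  walk g A Z (trim_to Z p) /\ excludes Z (behead (rev (trim_to Z p))).
Proof.
move=> wp /trim_toE [s [z [s' [Ep -> zZ sZ]]]]; split.
  move: wp; rewrite Ep; case: s {Ep sZ} => [/and3P [_ zA _]|b s /and3P [bp bA _]] /=.
    by rewrite zA zZ.
  by move: bp; rewrite cat_path last_rcons bA zZ !andbT => /andP [].
by rewrite rev_rcons /excludes all_rev.
Qed.

Definition trim_from Z q := rev (trim_to Z (rev q)).

Lemma mem_trim_from Z q : {subset trim_from Z q <= q}.
Proof. by move=> v; rewrite mem_rev => /mem_trim_to; rewrite mem_rev. Qed.

Lemma walk_trim_from g Z B q : walk g Z B q ->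
  walk g Z B (trim_from Z q) /\ excludes Z (behead (trim_from Z q)).
Proof.
rewrite -walk_rev => wq; have [wt et] := walk_trim_to wq (walk_has_last wq).
by rewrite -walk_rev revK.
Qed.

Lemma behead_rev a q : behead (rev (a :: q)) = rev (belast a q).
Proof. by rewrite lastI rev_rcons. Qed.

Lemma path_sub_belast g g' (P : pred T) a q :
  (forall u v, P u -> g u v -> g' u v) -> all P (belast a q) -> path g a q -> path g' a q.
Proof.
move=> gg'; elim: q a => //= b q IH a /andP [Pa Pq] /andP [gab pq].
by rewrite (gg' _ _ Pa gab) IH.
Qed.

(* Up to its first node in [Z], a walk from [A] to [B] only uses edges leaving nodes outside [Z]. *)
Lemma separates_entry g g' A B Z C :
  separates g A B Z -> (forall u v, u \notin Z -> g u v -> g' u v) ->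
  separates g' A Z C -> separates g A B C.
Proof.
move=> /separatesP sepZ gg' /separatesP sepC; apply/separatesP => p wp.
have hasZ : has [in Z] p by move: (sepZ p wp); rewrite excludesE negbK.
have [wt et] := walk_trim_to wp hasZ.
have wt' : walk g' A Z (trim_to Z p).
  move: wt et; case: (trim_to Z p) => // a q /and3P [aq aA lZ].
  rewrite behead_rev /excludes all_rev => qZ /=.
  by rewrite aA lZ (path_sub_belast gg' qZ aq).
by apply: contra (sepC _ wt'); apply/excludes_sub/mem_trim_to.
Qed.

Lemma separates_exit g g' A B Z C :
  separates g A B Z -> (forall u v, v \notin Z -> g u v -> g' u v) ->
  separates g' Z B C -> separates g A B C.
Proof.
move=> sepZ gg' sepC; rewrite -separates_rev.
have gg'_rev u v : u \notin Z -> revrel g u v -> revrel g' u v by move=> uZ; apply: gg'.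
by apply: separates_entry gg'_rev _; rewrite separates_rev.
Qed.

Definition del_edge g x y : rel T := [rel u v | g u v && ((u, v) != (x, y))].

Definition nedges g := #|[set uv : T * T | g uv.1 uv.2]|.

Lemma nedges_del_edge g x y : g x y -> nedges (del_edge g x y) < nedges g.
Proof.
move=> gxy; rewrite /nedges.
have -> : [set uv : T * T | del_edge g x y uv.1 uv.2] = [set uv : T * T | g uv.1 uv.2] :\ (x, y).
  by apply/setP => -[u v]; rewrite !inE /= andbC.
by apply/proper_card/properD1; rewrite inE.
Qed.

Lemma path_del_edge g x y a q : path g a q -> ~~ path (del_edge g x y) a q ->
  (x \in a :: q) && (y \in a :: q).
Proof.
elim: q a => //= b q IH a /andP [gab bq]; rewrite /del_edge /= gab negb_and negbK.
case/orP => [/eqP [-> ->]|/(IH b bq) /andP [xq yq]]; first by rewrite !inE !eqxx orbT.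
by apply/andP; split; apply: mem_behead.
Qed.

Lemma separates_del_edge g x y A B S z : z \in [:: x; y] ->
  separates (del_edge g x y) A B S -> separates g A B (z |: S).
Proof.
move=> zxy /separatesP sepS; apply/separatesP => -[//|a q] wp.
have [pq|npq] := boolP (path (del_edge g x y) a q).
  have wq : walk (del_edge g x y) A B (a :: q) by move: wp => /and3P [_ aA lB]; rewrite /= pq aA lB.
  exact: contra (excludes_setS (subsetUr _ _)) (sepS _ wq).
move: wp => /and3P [gq _ _]; have /andP [xq yq] := path_del_edge gq npq.
have zq : z \in a :: q by move: zxy; rewrite !inE => /orP [] /eqP ->.
by apply/negP => /allP /(_ z zq); rewrite setU11.
Qed.

Lemma menger_edgeless g A B k : nedges g = 0 ->
  (forall C, separates g A B C -> k <= #|C|) ->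
  exists ps, [/\ size ps = k, all (walk g A B) ps & disjoint_walks ps].
Proof.
move=> /cards0_eq noedge sepk.
have gF u v : g u v = false.
  by apply/negbTE/negP => guv; move/setP: noedge => /(_ (u, v)); rewrite !inE guv.
have leAB : k <= #|A :&: B|.
  apply: sepk; apply/separatesP => -[|a [|b q]] //=; last by rewrite gF.
  by move=> /andP [aA aB]; rewrite andbT negbK inE aA aB.
exists [seq [:: v] | v <- take k (enum (A :&: B))]; split.
- by rewrite size_map size_takel // -cardE.
- apply/allP => _ /mapP [v /mem_take vAB ->].
  by move: vAB; rewrite mem_enum inE.
- rewrite /disjoint_walks pairwise_map.
  apply: (sub_pairwise (r := [rel u v | u != v])).
    by move=> u v /= uv; rewrite disjoint_cons inE disjoint_has /= andbT.
  by rewrite -uniq_pairwise take_uniq // enum_uniq.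
Qed.

End Walks.

(* The walks of [ps] run from [A] into [x |: S], those of [qs] from [y |: S] to [B], touching
   these sets only at their last, resp. first, node. A walk ending at s in S is continued by
   the walk of [qs] starting at s, a walk ending at x by the edge xy and the walk starting at y.
   Walks of the two families can only meet in S, since S separates A from B in [g']. *)
Section Glue.
Variables (T : finType) (g g' : rel T) (A B S : {set T}) (x y : T) (ps qs : seq (seq T)).
Hypotheses (g'g : subrel g' g) (gxy : g x y) (yS : y \notin S).
Hypothesis sepS : separates g' A B S.
Hypotheses (ps_walk : all (walk g' A (x |: S)) ps)
  (ps_entry : all (fun p => excludes (x |: S) (behead (rev p))) ps)
  (ps_disj : disjoint_walks ps).
Hypotheses (qs_size : #|S|.+1 <= size qs) (qs_walk : all (walk g' (y |: S) B) qs)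
  (qs_exit : all (fun q => excludes (y |: S) (behead q)) qs) (qs_disj : disjoint_walks qs).

Lemma glue_exit_head q v : q \in qs -> v \in q -> v \in y |: S -> v = head y q.
Proof.
move=> qin vq vZ; have /allP tail := allP qs_exit q qin.
by case: q qin vq tail => // b q _; rewrite inE => /predU1P [-> //|/[swap] /[apply]]; rewrite vZ.
Qed.

Lemma glue_meet_in_S p q v : p \in ps -> q \in qs -> v \in p -> v \in q -> v \in S.
Proof.
move=> pin qin vp vq; apply/contraT => vS.
have := allP ps_entry p pin; have := allP ps_walk p pin.
case: p pin vp => // a p _ vp /and3P [ap aA _].
rewrite behead_rev /excludes all_rev => /(excludes_setS (subsetUr _ _)) pS.
have := allP qs_exit q qin; have := allP qs_walk q qin.
case: q qin vq => // b q _ vq /and3P [bq _ lB] /(excludes_setS (subsetUr _ _)) qS.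
have av := connect_minus_prefix ap pS vp vS.
have vl := connect_minus_suffix bq qS vq vS.
have aAS : a \in A :\: S by rewrite inE aA (connect_minus_notin av) vS.
have lBS : last b q \in B :\: S by rewrite inE lB -(connect_minus_notin vl) vS.
by move: (forall_inP (forall_inP sepS a aAS) _ lBS); rewrite (connect_trans av vl).
Qed.

Definition glue_target p := if last x p == x then y else last x p.

Definition glue_partner p := nth [::] qs (find (fun q => head y q == glue_target p) qs).

Definition glue_tail p := if last x p == x then glue_partner p else behead (glue_partner p).

Lemma glue_last_entry p : p \in ps -> last x p \in x |: S.
Proof. by move/(allP ps_walk); case: p => // a p /and3P []. Qed.

Lemma glue_target_in p : p \in ps -> glue_target p \in y |: S.
Proof.
move/glue_last_entry; rewrite /glue_target !in_setU1.
by case: eqP => [_|_ /= ->]; rewrite ?eqxx ?orbT.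
Qed.

Lemma glue_partnerP p :
  p \in ps -> glue_partner p \in qs /\ head y (glue_partner p) = glue_target p.
Proof.
move=> pin; have leY : #|y |: S| <= size qs by rewrite cardsU1 yS.
have /(walk_heads_cover y qs_disj qs_walk leY) /mapP [q qin qhead] := glue_target_in pin.
have has_q : has (fun q => head y q == glue_target p) qs by apply/hasP; exists q; rewrite ?qhead.
by split; [rewrite mem_nth // -has_find | apply/eqP/(nth_find [::] has_q)].
Qed.

Lemma glue_tail_notin_S p v : p \in ps -> v \in glue_tail p -> v \notin S.
Proof.
move=> /glue_partnerP [qin qhead]; rewrite /glue_tail; case: eqP => [lx vq|_].
  apply/negP => vS; move: (glue_exit_head qin vq); rewrite in_setU1 vS orbT => /(_ isT).
  by rewrite qhead /glue_target lx eqxx => vy; move: yS; rewrite -vy vS.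
have := allP qs_exit _ qin; case: (glue_partner p) => //= b q /allP qZ /qZ.
by apply: contra => vS; rewrite in_setU1 vS orbT.
Qed.

Lemma glue_walk p : p \in ps -> walk g A B (p ++ glue_tail p).
Proof.
move=> pin; have [qin qhead] := glue_partnerP pin.
have := allP ps_walk p pin; have := allP qs_walk _ qin.
rewrite /glue_tail; move: qhead; rewrite /glue_target.
case: (glue_partner p) {qin} => // b q; case: p pin => // a p _ /= bt.
move=> /and3P [bq _ lB] /and3P [ap aA _].
rewrite aA cat_path (sub_path g'g ap) last_cat.
by case: eqP bt => [lx|_] bt; subst b; rewrite /= ?lx ?gxy (sub_path g'g bq) lB.
Qed.

Lemma mem_glue_tail p : {subset glue_tail p <= glue_partner p}.
Proof. by rewrite /glue_tail => v; case: ifP => // _ /mem_behead. Qed.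

Lemma glue_target_inj p1 p2 : p1 \in ps -> p2 \in ps ->
  glue_target p1 = glue_target p2 -> last x p1 = last x p2.
Proof.
move=> /glue_last_entry l1 /glue_last_entry l2; rewrite /glue_target.
case: eqP l1 => [-> _|n1]; case: eqP l2 => [-> _|n2] //.
- by rewrite in_setU1 (introF eqP n2) /= => l2S yl2; move: yS; rewrite yl2 l2S.
- by rewrite in_setU1 (introF eqP n1) /= => l1S l1y; move: yS; rewrite -l1y l1S.
Qed.

Lemma glue_disjoint p1 p2 : p1 \in ps -> p2 \in ps -> [disjoint p1 & p2] ->
  [disjoint p1 ++ glue_tail p1 & p2 ++ glue_tail p2].
Proof.
have cross p p' v : p \in ps -> p' \in ps -> v \in p -> v \notin glue_tail p'.
  move=> pin p'in vp; apply/negP => vt; have [qin _] := glue_partnerP p'in.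
  by move: (glue_tail_notin_S p'in vt); rewrite (glue_meet_in_S pin qin vp (mem_glue_tail vt)).
move=> p1in p2in d12.
have partners : glue_partner p1 != glue_partner p2.
  apply/eqP => e12; have [_ h1] := glue_partnerP p1in; have [_ h2] := glue_partnerP p2in.
  have := glue_target_inj p1in p2in; rewrite -h1 -h2 e12 => /(_ erefl) l12.
  move: (allP ps_walk _ p1in) (allP ps_walk _ p2in) d12 l12.
  case: p1 {p1in h1 e12} => // a1 p1 _; case: p2 {p2in h2} => // a2 p2 _ /disjointFr /= + l12.
  by move=> /(_ _ (mem_last a1 p1)); rewrite l12 mem_last.
have [q1in _] := glue_partnerP p1in; have [q2in _] := glue_partnerP p2in.
have dq := disjoint_walks_mem qs_disj q1in q2in partners.
apply/disjoint_seqP => v; rewrite !mem_cat negb_or => /orP [v1|/[dup] v1 /mem_glue_tail vq1].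
  by rewrite (disjointFr d12 v1) (cross _ _ _ p1in p2in v1).
apply/andP; split; apply/negP.
  by move=> v2; move: (cross _ _ _ p2in p1in v2); rewrite v1.
by move=> /mem_glue_tail vq2; rewrite (disjointFr dq vq1) in vq2.
Qed.

Lemma glue_walks : exists rs, [/\ size rs = size ps, all (walk g A B) rs & disjoint_walks rs].
Proof.
exists [seq p ++ glue_tail p | p <- ps]; split.
- by rewrite size_map.
- by apply/allP => _ /mapP [p pin ->]; apply: glue_walk.
- rewrite /disjoint_walks pairwise_map.
  apply: (sub_in_pairwise (P := mem ps)) _ (allss ps) ps_disj => p1 p2 p1in p2in.
  exact: glue_disjoint.
Qed.

End Glue.

Section Menger.
Variable T : finType.
Implicit Types (g : rel T) (A B C S : {set T}).

Lemma menger_split g x y A B S :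
  g x y -> separates (del_edge g x y) A B S ->
  (forall C, separates g A B C -> #|S| < #|C|) ->
  (forall A' B', (forall C, separates (del_edge g x y) A' B' C -> #|S| < #|C|) ->
     exists ps, [/\ size ps = #|S|.+1, all (walk (del_edge g x y) A' B') ps & disjoint_walks ps]) ->
  exists ps, [/\ size ps = #|S|.+1, all (walk g A B) ps & disjoint_walks ps].
Proof.
move=> gxy sepS bound IH; set g' := del_edge g x y.
have g'g : subrel g' g by move=> u v /andP [].
have sepx := separates_del_edge (z := x) (mem_head _ _) sepS.
have sepy := separates_del_edge (z := y) (mem_last _ [:: y]) sepS.
have notin_S z : separates g A B (z |: S) -> z \notin S.
  by move=> /bound; apply: contraTN => zS; rewrite cardsU1 zS ltnn.
have entry_edge u v : u \notin x |: S -> g u v -> g' u v.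
  rewrite in_setU1 negb_or => /andP [ux _] guv.
  by rewrite /g' /del_edge /= guv; apply: contra ux => /eqP [->].
have exit_edge u v : v \notin y |: S -> g u v -> g' u v.
  rewrite in_setU1 negb_or => /andP [vy _] guv.
  by rewrite /g' /del_edge /= guv; apply: contra vy => /eqP [_ ->].
have [ps [ps_size ps_walk ps_disj]] :=
  IH A (x |: S) (fun C sepC => bound C (separates_entry sepx entry_edge sepC)).
have [qs [qs_size qs_walk qs_disj]] :=
  IH (y |: S) B (fun C sepC => bound C (separates_exit sepy exit_edge sepC)).
set ps' := map (trim_to (x |: S)) ps; set qs' := map (trim_from (y |: S)) qs.
have ps'_walk : all (walk g' A (x |: S)) ps'.
  by apply/allP => _ /mapP [p /(allP ps_walk) wp ->]; case: (walk_trim_to wp (walk_has_last wp)).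
have ps'_entry : all (fun p => excludes (x |: S) (behead (rev p))) ps'.
  by apply/allP => _ /mapP [p /(allP ps_walk) wp ->]; case: (walk_trim_to wp (walk_has_last wp)).
have qs'_walk : all (walk g' (y |: S) B) qs'.
  by apply/allP => _ /mapP [q /(allP qs_walk) /walk_trim_from [wq _] ->].
have qs'_exit : all (fun q => excludes (y |: S) (behead q)) qs'.
  by apply/allP => _ /mapP [q /(allP qs_walk) /walk_trim_from [_ exq] ->].
have qs'_size : #|S|.+1 <= size qs' by rewrite size_map qs_size.
have [rs [rs_size rs_walk rs_disj]] := glue_walks g'g gxy (notin_S _ sepy) sepS
  ps'_walk ps'_entry (disjoint_walks_map (@mem_trim_to _ _) ps_disj)
  qs'_size qs'_walk qs'_exit (disjoint_walks_map (@mem_trim_from _ _) qs_disj).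
by exists rs; rewrite rs_size size_map ps_size.
Qed.

Theorem menger g A B k : (forall C, separates g A B C -> k <= #|C|) ->
  exists ps, [/\ size ps = k, all (walk g A B) ps & disjoint_walks ps].
Proof.
have [n] := ubnP (nedges g); elim: n => // n IH in g A B k *; rewrite ltnS => le_gn sepk.
have [noedge|] := posnP (nedges g); first exact: menger_edgeless.
rewrite card_gt0 => /set0Pn [[x y]]; rewrite inE /= => gxy.
have lt_g'n := leq_trans (nedges_del_edge gxy) le_gn.
have [/existsP [S /andP [sepS ltSk]]|/existsPn small] :=
  boolP [exists S : {set T}, separates (del_edge g x y) A B S && (#|S| < k)].
  have le_kS : k <= #|S|.+1.
    apply: leq_trans (sepk _ (separates_del_edge (mem_head x [:: y]) sepS)) _.
    by rewrite cardsU1 -add1n leq_add2r leq_b1.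
  have -> : k = #|S|.+1 by apply/eqP; rewrite eqn_leq le_kS.
  apply: menger_split gxy sepS (fun C sepC => leq_trans ltSk (sepk C sepC)) _ => A' B' sep'.
  exact: IH lt_g'n sep'.
have [ps [ps_size ps_walk ps_disj]] : exists ps,
    [/\ size ps = k, all (walk (del_edge g x y) A B) ps & disjoint_walks ps].
  by apply: IH lt_g'n _ => C sepC; rewrite leqNgt; move: (small C); rewrite sepC.
by exists ps; split => //; apply: sub_all ps_walk => p; apply: walk_sub => u v /andP [].
Qed.

End Menger.

Section Fans.
Variables (T : finType) (e : rel T) (f : nat).
Implicit Types (F B C W X : {set T}) (p q : seq T).

Definition fan F X y := exists ps : seq (seq T),
  [/\ f.+1 <= size ps, all (fun p => Xy_path e X y p && excludes F p) ps & disjoint_paths y ps].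

Definition in_nbrs F z := [set w | e w z] :\: (z |: F).

Lemma Xy_path_walk X y p : Xy_path e X y p -> walk e X [set y] p.
Proof. by case: p => // a q /and3P [/andP [aq _] aX ly]; rewrite /= aq aX inE. Qed.

Lemma fan_setS F X X' y : X \subset X' -> fan F X y -> fan F X' y.
Proof.
move=> /subsetP XX' [ps [size_ps walk_ps disj_ps]]; exists ps; split => //.
apply: sub_all walk_ps => -[//|a q] /andP [/and3P [aq /XX' aX' lq] ->].
by rewrite /Xy_path aq aX' lq.
Qed.

Lemma fan_source_ne0 F X y : fan F X y -> X != set0.
Proof.
case=> ps [size_ps walk_ps _]; case: ps size_ps walk_ps => // p ps _ /andP [/andP [Xp _] _].
by case: p Xp => // a q /and3P [_ aX _]; apply/set0Pn; exists a.
Qed.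

Lemma fan_source_large F X y : y \notin X -> fan F X y -> f < #|X|.
Proof.
move=> yX [ps [size_ps walk_ps disj_ps]]; rewrite ltnNge; apply/negP => leX.
have [p pin pX] := disjoint_paths_avoid (leq_ltn_trans leX size_ps) disj_ps yX.
have /andP [/andP [_ /andP [hX _]] _] := allP walk_ps p pin.
case: p {pin} pX hX => [_ yX'|a q /andP [aX _] /= aX']; first by rewrite yX' in yX.
by rewrite aX' in aX.
Qed.

Lemma fan_set1 F v y : 0 < f -> y != v -> ~ fan F [set v] y.
Proof.
move=> f_gt0 yv [ps [size_ps walk_ps disj_ps]].
have heads i : i < size ps -> v \in nth [::] ps i.
  move=> ips; have /andP [/and3P [_ + _] _] := allP walk_ps _ (mem_nth [::] ips).
  case: (nth [::] ps i) => [/set1P /= yv'|a q /set1P /= ->]; last exact: mem_head.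
  by rewrite yv' eqxx in yv.
have two : 1 < size ps by apply: leq_ltn_trans f_gt0 size_ps.
by move: (disj_ps 0 1 two v (heads 0 (ltnW two)) (heads 1 two)) => vy; rewrite vy eqxx in yv.
Qed.

Lemma Xy_path_last_edge X y p : y \notin X -> Xy_path e X y p ->
  exists2 u, u \in p & (u != y) && e u y.
Proof.
case: p => // a q yX /and3P [/andP [aq uq] /= aX /eqP ly].
case/lastP: q aq uq ly => [_ _ ay|q w]; first by rewrite -ay aX in yX.
rewrite last_rcons rcons_path => + + wy; rewrite {w}wy -[a :: rcons q y]/(rcons (a :: q) y).
rewrite rcons_uniq => /andP [_ e_last] /andP [yq _]; exists (last a q).
  by rewrite mem_rcons in_cons mem_last orbT.
by rewrite e_last andbT; apply: contraNneq yq => <-; apply: mem_last.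
Qed.

Lemma in_nbrs_not_separated F B C z p : z \notin B ->
  walk e B [set z] p -> excludes F p -> excludes (C :\ z) p ->
  ~~ separates (rel_minus e (z |: F)) B (in_nbrs F z) C.
Proof.
move=> zB wp pF pC; have zp : has [in [set z]] p by apply: walk_has_last wp.
have [s [v [s' [Ep Et /set1P vz sz]]]] := trim_toE zp.
have [+ _] := walk_trim_to wp zp; rewrite Et {Et}; subst v.
case: s Ep sz => [_ _ /and3P [_ zB' _]|b s Ep sz /and3P [bs bB _]]; first by rewrite zB' in zB.
have sub_p : {subset b :: s <= p} by move=> u us; rewrite Ep mem_cat mem_rcons in_cons us orbT.
have bsF : excludes (z |: F) (b :: s).
  apply/allP => u us; have := allP sz u us; rewrite in_setU1 negb_or inE => -> /=.
  by move/sub_p: us => /(allP pF).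
have bsC : excludes C (b :: s).
  apply/allP => u us; have /allP /(_ u us) := sz; rewrite inE => uz.
  by move/sub_p: us => /(allP pC); rewrite in_setD1 uz.
move: bs; rewrite rcons_path => /andP [bs e_last].
have ws : walk (rel_minus e (z |: F)) B (in_nbrs F z) (b :: s).
  have lF : last b s \notin z |: F by apply: (allP bsF); apply: mem_last.
  move: bsF => /= /andP [bF sF]; rewrite path_minus // bs sF bB.
  by move: lF; rewrite !inE e_last => ->.
by apply/separatesP => /(_ _ ws); rewrite bsC.
Qed.

Definition fan_path z p := if p is b :: q then rcons (b :: shorten b q) z else [::].

Lemma fan_path_spec F B z p : z \notin F -> z \notin B ->
  walk (rel_minus e (z |: F)) B (in_nbrs F z) p ->
  [/\ Xy_path e B z (fan_path z p), excludes F (fan_path z p) & {subset fan_path z p <= z :: p}].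
Proof.
case: p => // b q zF zB /and3P [bq bB]; rewrite /fan_path.
case: (shortenP bq) => q' bq' uq' sub_q'; move=> /setDP [+ lN]; rewrite inE => e_last.
have bqF : excludes (z |: F) (b :: q') by apply: path_minus_excludes bq' lN.
split.
- rewrite /Xy_path /dpath /= last_rcons eqxx bB rcons_path e_last !andbT.
  rewrite (sub_path _ bq'); last by move=> u v /and3P [].
  move: uq' bqF => /= /andP [bq'' uq] /andP [bzF qzF].
  rewrite mem_rcons inE negb_or bq'' rcons_uniq uq !andbT.
  move: bzF; rewrite in_setU1 negb_or => /andP [-> _] /=.
  by apply/negP => /(allP qzF); rewrite setU11.
- by move: (excludes_setS (subsetUr _ _) bqF); rewrite /excludes all_rcons zF.
- move=> v; rewrite mem_rcons !inE.
  by case/predU1P => [->|/predU1P [->|/sub_q' ->]]; rewrite ?eqxx ?orbT.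
Qed.

Lemma fan_of_walks F B z ps : z \notin F -> z \notin B -> f.+1 <= size ps ->
  all (walk (rel_minus e (z |: F)) B (in_nbrs F z)) ps -> disjoint_walks ps -> fan F B z.
Proof.
move=> zF zB size_ps walk_ps disj_ps.
have spec p : p \in ps ->
    [/\ Xy_path e B z (fan_path z p), excludes F (fan_path z p) & {subset fan_path z p <= z :: p}].
  by move/(allP walk_ps); apply: fan_path_spec.
exists (map (fan_path z) ps); split.
- by rewrite size_map.
- by apply/allP => _ /mapP [p /spec [Xp Fp _] ->]; rewrite Xp Fp.
move=> i j /andP [ij]; rewrite size_map => jps v; have ips := ltn_trans ij jps.
have [_ _ sub_i] := spec _ (mem_nth [::] ips); have [_ _ sub_j] := spec _ (mem_nth [::] jps).
rewrite !(nth_map [::]) // => /sub_i + /sub_j.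
rewrite !inE => /predU1P [//|vi] /predU1P [//|vj].
have := (pairwiseP [::] disj_ps) i j; rewrite !inE => /(_ ips jps ij) dij.
by rewrite (disjointFr dij vi) in vj.
Qed.

(* By Menger's theorem it suffices that no set C of at most f nodes separates B from the
   in-neighbours of z in G - F - z: some path of the fan from B :|: W avoids C, and if it starts
   at w in W it is prolonged backwards by a path of the fan from B to w avoiding C. *)
Lemma fan_trans F B W z : z \notin F -> z \notin B ->
  (forall w, w \in W -> fan F B w) -> fan F (B :|: W) z -> fan F B z.
Proof.
move=> zF zB fanW; have [/fanW //|zW [ps [size_ps walk_ps disj_ps]]] := boolP (z \in W).
have [|rs [size_rs walk_rs disj_rs]] := @menger T (rel_minus e (z |: F)) B (in_nbrs F z) f.+1.
  move=> C; rewrite ltnNge; apply: contraL => leC.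
  have ltCz : #|C :\ z| < size ps.
    by apply: leq_ltn_trans (subset_leq_card (subD1set C z)) (leq_trans _ size_ps).
  have [p pin pC] := disjoint_paths_avoid ltCz disj_ps (negbT (setD11 z C)).
  have /andP [/Xy_path_walk + pF] := allP walk_ps p pin.
  case: p {pin} pF pC => // h p pF pC /and3P [hp /setUP [hB|hW] lz].
    by apply: (in_nbrs_not_separated zB _ pF pC); rewrite /= hp hB lz.
  have hC : h \notin C.
    have /andP [+ _] := pC; rewrite in_setD1 negb_and negbK.
    by case/orP => [/eqP hz|//]; rewrite -hz hW in zW.
  have [qs [size_qs walk_qs disj_qs]] := fanW h hW.
  have [r rin rC] := disjoint_paths_avoid (leq_ltn_trans leC size_qs) disj_qs hC.
  have /andP [/Xy_path_walk wr rF] := allP walk_qs r rin.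
  apply: (in_nbrs_not_separated zB (walk_cat wr (_ : walk e [set h] [set z] (h :: p)))).
  - by rewrite /= hp set11 lz.
  - by rewrite excludes_cat rF; case/andP: pF.
  - by rewrite excludes_cat (excludes_setS (subD1set C z) rC); case/andP: pC.
by apply: fan_of_walks zF zB _ walk_rs disj_rs; rewrite size_rs.
Qed.

End Fans.

Lemma exists_source (T : finType) (h : rel T) (P : pred T) r0 : P r0 ->
  exists2 r, P r & forall u, P u -> connect h u r -> connect h r u.
Proof.
move=> Pr0; case: (arg_minnP (fun r => #|[set u | connect h u r]|) Pr0) => r Pr rmin.
exists r => // u Pu ur.
have sub : [set w | connect h w u] \subset [set w | connect h w r].
  by apply/subsetP => w; rewrite !inE => /connect_trans; apply.
have /eqP eq_anc : [set w | connect h w u] == [set w | connect h w r] by rewrite eqEcard sub rmin.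
have : r \in [set w | connect h w r] by rewrite inE connect0.
by rewrite -eq_anc inE.
Qed.

Section Claim.
Variables (T : finType) (e : rel T) (f : nat).
Hypothesis f_gt0 : 0 < f.
Hypothesis partition_reach : forall X Y Z : {set T},
  [disjoint X & Y] -> [disjoint X & Z] -> [disjoint Y & Z] -> X :|: Y :|: Z = setT ->
  X != set0 -> Y != set0 -> #|Z| <= f -> reach e f Z X Y \/ reach e f Z Y X.

Lemma reach_cut (Z X : {set T}) : #|Z| <= f -> X != set0 -> [disjoint X & Z] ->
  reach e f Z X (~: Z :\: X) \/ reach e f Z (~: Z :\: X) X.
Proof.
move=> leZ X_ne XZ; have [->|Y_ne] := eqVneq (~: Z :\: X) set0; first by left; left.
apply: partition_reach => //.
- by rewrite disjoint_sym disjoints_subset subsetDr.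
- by rewrite disjoints_subset subsetDl.
- by apply/setP => v; rewrite !inE; case: (v \in X); case: (v \in Z).
Qed.

Variables F A B : {set T}.
Hypotheses (F_small : #|F| <= f) (AB_disj : [disjoint A & B]) (AB_cover : A :|: B = ~: F).
Hypotheses (B_ne : B != set0) (A_reach_B : reach e f F A B).

Lemma notin_F_AB u : u \notin F -> (u \in A) || (u \in B).
Proof. by rewrite -in_setU AB_cover inE. Qed.

Lemma A_notin_F u : u \in A -> u \notin F.
Proof. by move=> uA; rewrite -in_setC -AB_cover in_setU uA. Qed.

Lemma fan_from_A b : b \in B -> fan e f F A b.
Proof. by case: A_reach_B => [B0|fans] bB; [move: B_ne; rewrite B0 eqxx | apply: fans]. Qed.

Lemma card_in_nbrs_F v : v \in F -> f < #|[set u | (u \notin F) && e u v]|.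
Proof.
move=> vF; set N := [set u | _]; rewrite ltnNge; apply/negP => leN.
have [b bB] := set0Pn _ B_ne.
have ltA := fan_source_large (negbT (disjointFl AB_disj bB)) (fan_from_A bB).
have vN : [disjoint [set v] & N] by rewrite disjoints_subset sub1set !inE vF.
have Y_ne : ~: N :\: [set v] != set0.
  apply: contraTneq ltA => Y0; rewrite -leqNgt.
  have AN : A \subset N.
    apply/subsetP => u uA; apply: contraT => uN.
    have : u \in ~: N :\: [set v].
      by rewrite in_setD in_setC uN in_set1 andbT; apply: contraNneq (A_notin_F uA) => ->.
    by rewrite Y0 inE.
  exact: leq_trans (subset_leq_card AN) leN.
have v_ne : [set v] != set0 by apply/set0Pn; exists v; rewrite inE.
case: (reach_cut leN v_ne vN) => [[Y0|fanY]|[v0|fanv]].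
- by rewrite Y0 eqxx in Y_ne.
- have [y yY] := set0Pn _ Y_ne; apply: (fan_set1 f_gt0 _ (fanY y yY)).
  by move: yY; rewrite !inE => /andP [].
- by rewrite v0 eqxx in v_ne.
have [ps [size_ps walk_ps disj_ps]] := fanv v (set11 v).
have ltF : #|F :\ v| < size ps.
  exact: leq_ltn_trans (leq_trans (subset_leq_card (subD1set F v)) F_small) size_ps.
have [p pin pF] := disjoint_paths_avoid ltF disj_ps (negbT (setD11 v F)).
have /andP [Xp pN] := allP walk_ps p pin.
have vY : v \notin ~: N :\: [set v] by rewrite !inE eqxx.
have [u up /andP [uv euv]] := Xy_path_last_edge vY Xp.
have := allP pN u up; rewrite inE euv andbT negbK => uF.
by have := allP pF u up; rewrite in_setD1 uv uF.
Qed.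

Variable r : T.
Hypotheses (r_notin_F : r \notin F)
  (r_source : forall u, u \notin F -> connect (rel_minus e F) u r -> connect (rel_minus e F) r u).

Definition source_set := [set u | connect (rel_minus e F) u r].

Lemma source_set_r : r \in source_set.
Proof. by rewrite inE connect0. Qed.

Lemma source_set_ne0 : source_set != set0.
Proof. by apply/set0Pn; exists r; apply: source_set_r. Qed.

Lemma source_set_notin_F u : u \in source_set -> u \notin F.
Proof. by rewrite inE => /connect_minus_notin ->. Qed.

Lemma strongly_connected_source_set (S : {set T}) :
  S \subset source_set -> strongly_connected_minus e F S.
Proof.
move=> /subsetP sub i j /sub iS /sub jS; apply: connect_trans (_ : connect _ i r) _.
  by move: iS; rewrite inE.
by apply: r_source (source_set_notin_F jS) _; move: jS; rewrite inE.
Qed.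

Lemma fan_in_source_set (X : {set T}) y :
  y \in source_set -> fan e f F X y -> fan e f F (X :&: source_set) y.
Proof.
move=> yS [ps [size_ps walk_ps disj_ps]]; exists ps; split => //.
apply: sub_all walk_ps => -[//|a q] /andP [/and3P [aq aX ly] pF].
rewrite /Xy_path aq ly pF !andbT /= inE aX /=.
case/andP: pF aq => aF qF /andP [aq _]; move: yS; rewrite !inE; apply: connect_trans.
by apply/connectP; exists q; [rewrite path_minus // aq | apply/esym/eqP].
Qed.

Lemma source_set_meets (X : {set T}) y :
  y \in source_set -> fan e f F X y -> X :&: source_set != set0.
Proof. by move=> yS /(fan_in_source_set yS) /fan_source_ne0. Qed.

Lemma reach_source_set : reach e f F source_set (~: F :\: source_set).
Proof.
have SF : [disjoint source_set & F].
  by rewrite disjoints_subset; apply/subsetP => u /source_set_notin_F; rewrite inE.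
case: (reach_cut F_small source_set_ne0 SF) => // -[S0|fans].
  by move: source_set_ne0; rewrite S0 eqxx.
have := source_set_meets source_set_r (fans r source_set_r).
suff -> : (~: F :\: source_set) :&: source_set = set0 by rewrite eqxx.
by apply/setP => u; rewrite in_setI in_setD in_set0; case: (u \in source_set); rewrite ?andbF.
Qed.

Lemma source_set_AB_reach :
  exists S : {set T}, [/\ S != set0, S \subset A :|: B, reach e f F S (~: F :\: S),
    strongly_connected_minus e F S & reach e f F A (S :\: A)].
Proof.
exists source_set; split.
- exact: source_set_ne0.
- by rewrite AB_cover; apply/subsetP => u /source_set_notin_F; rewrite inE.
- exact: reach_source_set.
- exact: strongly_connected_source_set.
right => u /setDP [/source_set_notin_F uF uA]; apply: fan_from_A.
by move: (notin_F_AB uF); rewrite (negbTE uA).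
Qed.

Lemma reach_B_A :
  reach e f F (~: F :\: (source_set :&: A)) (source_set :&: A) -> reach e f F B A.
Proof.
move=> reach_A1; right => a aA.
have fan_A1 x : x \in source_set :&: A -> fan e f F B x.
  move=> xA1; case: reach_A1 => [A10|fans]; first by rewrite A10 inE in xA1.
  move: (xA1); rewrite inE => /andP [xS _].
  apply: fan_setS (fan_in_source_set xS (fans x xA1)); apply/subsetP => u.
  rewrite !inE negb_and => /andP [/andP [/orP [uS|uA] uF] uS']; first by rewrite uS' in uS.
  by move: (notin_F_AB uF); rewrite (negbTE uA).
have [aS|aS] := boolP (a \in source_set); first by apply: fan_A1; rewrite inE aS.
set A2 := A :\: source_set.
have A2F : [disjoint A2 & F].
  by rewrite disjoints_subset; apply/subsetP => u /setDP [/A_notin_F uF _]; rewrite inE.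
have A2_ne : A2 != set0 by apply/set0Pn; exists a; rewrite inE aS.
have rA2 : r \in ~: F :\: A2 by rewrite !in_setD source_set_r in_setC r_notin_F.
case: (reach_cut F_small A2_ne A2F) => [[Y0|fans]|[A20|fans]].
- by rewrite Y0 inE in rA2.
- suff A2S : A2 :&: source_set = set0.
    by move: (source_set_meets source_set_r (fans r rA2)); rewrite A2S eqxx.
  by apply/setP => u; rewrite in_setI in_setD in_set0; case: (u \in source_set); rewrite ?andbF.
- by move: A2_ne; rewrite A20 eqxx.
have aB : a \notin B by rewrite (disjointFr AB_disj aA).
apply: (@fan_trans _ _ _ _ _ (source_set :&: A)) (A_notin_F aA) aB fan_A1 _.
apply: fan_setS (fans a _); last by rewrite inE aS.
apply/subsetP => u; rewrite !inE negb_and negbK => /andP [/orP [uS|uA] uF].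
  by rewrite uS /= orbC; apply: notin_F_AB.
by move: (notin_F_AB uF); rewrite (negbTE uA) /= => ->.
Qed.

Lemma source_set_A_reach : ~ reach e f F B A ->
  exists S : {set T}, [/\ S != set0, S \subset A, reach e f F S (~: F :\: S) &
    strongly_connected_minus e F S].
Proof.
move=> not_BA; have A1_ne : source_set :&: A != set0.
  have [rA|rA] := boolP (r \in A); first by apply/set0Pn; exists r; rewrite inE rA source_set_r.
  have rB : r \in B by move: (notin_F_AB r_notin_F); rewrite (negbTE rA).
  by rewrite setIC; apply: source_set_meets source_set_r (fan_from_A rB).
have A1F : [disjoint source_set :&: A & F].
  by rewrite disjoints_subset; apply/subsetP => u /setIP [_ /A_notin_F]; rewrite inE.
exists (source_set :&: A); split => //.
- exact: subsetIr.
- by case: (reach_cut F_small A1_ne A1F) => // /reach_B_A.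
- exact/strongly_connected_source_set/subsetIl.
Qed.

End Claim.

Theorem claim1 (T : finType) (e : rel T) (f : nat)
  (Hloop : irreflexive e)
  (HV : 2 <= #|T|)
  (Hf : 0 < f)
  (Hcond : forall X Y Z : {set T},
      [disjoint X & Y] -> [disjoint X & Z] -> [disjoint Y & Z] ->
      X :|: Y :|: Z = setT ->
      X != set0 -> Y != set0 -> #|Z| <= f ->
      reach e f Z X Y \/ reach e f Z Y X)
  (F A B : {set T})
  (HF : #|F| <= f)
  (HAB : [disjoint A & B]) (HABF : A :|: B = ~: F)
  (HA0 : A != set0) (HB0 : B != set0)
  (HAreachB : reach e f F A B) :
  [/\ (~ reach e f F B A ->
        exists S : {set T},
          [/\ S != set0, S \subset A,
              reach e f F S (~: F :\: S) &
              strongly_connected_minus e F S]),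
      (reach e f F B A ->
        exists S : {set T},
          [/\ S != set0, S \subset A :|: B,
              reach e f F S (~: F :\: S),
              strongly_connected_minus e F S &
              reach e f F A (S :\: A)]) &
      (forall v, v \in F -> f.+1 <= #|[set u | (u \notin F) && e u v]|)].
Proof.
have [a aA] := set0Pn _ HA0.
have [r rF r_source] :=
  exists_source (rel_minus e F) (P := fun u => u \notin F) (A_notin_F HABF aA).
split.
- exact (source_set_A_reach Hcond HF HAB HABF HB0 HAreachB rF r_source).
- by move=> _; exact (source_set_AB_reach Hcond HF HABF HB0 HAreachB rF r_source).
- exact (card_in_nbrs_F Hf Hcond HF HAB HABF HB0 HAreachB).
Qed.
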